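(* Suppose there exists $r>0$ such that $\phi(x)>r$ for all $x>0$. For each integer $N\ge1$ let $V(N)$ denote the optimal value of the problem: minimize $Y_{N-1}^+$ over $d_0,\dots,d_{N-1}\ge0$ subject to $\sum_{k=0}^{N-1}\mathrm{BED}_O(d_k)\le c$. Then there exists a finite optimal number of fractions $N^*$, i.e. $\min_{N\in\{1,2,\dots\}}V(N)$ is attained at some finite $N^*$.
   Context: Model: Tumor parameters $\alpha_T>0$, $\beta_T>0$, $[\alpha/\beta]_T=\alpha_T/\beta_T$; organ-at-risk (OAR) parameter $[\alpha/\beta]_O>0$; sparing factor $0<\gamma<1$; OAR limit $c>0$. Define $\mathrm{BED}_T(d)=d\left(1+\frac{d}{[\alpha/\beta]_T}\right)$ and $\mathrm{BED}_O(d)=\gamma d\left(1+\frac{\gamma d}{[\alpha/\beta]_O}\right)$. Tumor growth between doses follows $\frac{1}{x}\frac{dx}{dt}=\phi(x)$, with $\phi:(0,\infty)\to\mathbb{R}$ continuous and non-increasing. Doses $d_0,\dots,d_{N-1}$ are delivered at times $0,1,\dots,N-1$. With $Y=\ln(\text{number of tumor cells})/\alpha_T$, let $F$ be the one-day growth map for $Y$ under the ODE. With initial cell number $X_0>0$ (fixed, independent of $N$) and $Y_0^-=\ln(X_0)/\alpha_T$: $Y_0^+=Y_0^--\mathrm{BED}_T(d_0)$, $Y_{i+1}^+=F(Y_i^+)-\mathrm{BED}_T(d_{i+1})$ for $i=0,\dots,N-2$. *)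

From Stdlib Require Import Reals.
From Coquelicot Require Import Coquelicot.
Open Scope R_scope.

Definition BED_T (abT d : R) : R := d * (1 + d / abT).
Definition BED_O (abO gamma d : R) : R := gamma * d * (1 + gamma * d / abO).

(* F is the one-day growth map of Y = ln(x)/alpha_T under (1/x) dx/dt = phi(x):
   for every y, F y = Yf 1 where Yf is a (classical) solution on [0,1] of
   dY/dt = phi(exp(alpha_T * Y)) / alpha_T with Yf 0 = y. *)
Definition is_growth_map (alphaT : R) (phi : R -> R) (F : R -> R) : Prop :=
  forall y : R, exists Yf : R -> R,
    Yf 0 = y /\
    (forall t, 0 <= t <= 1 -> continuity_pt Yf t) /\
    (forall t, 0 < t < 1 -> is_derive Yf t (phi (exp (alphaT * Yf t)) / alphaT)) /\
    F y = Yf 1.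

Fixpoint Yplus (abT : R) (F : R -> R) (Y0 : R) (d : nat -> R) (i : nat) : R :=
  match i with
  | O => Y0 - BED_T abT (d O)
  | S j => F (Yplus abT F Y0 d j) - BED_T abT (d (S j))
  end.

Fixpoint sum_BED_O (abO gamma : R) (d : nat -> R) (N : nat) : R :=
  match N with
  | O => 0
  | S j => sum_BED_O abO gamma d j + BED_O abO gamma (d j)
  end.

Definition feasible (abO gamma c : R) (N : nat) (d : nat -> R) : Prop :=
  (forall k, (k < N)%nat -> 0 <= d k) /\ sum_BED_O abO gamma d N <= c.

Definition V (abT abO gamma c : R) (F : R -> R) (Y0 : R) (N : nat) : Rbar :=
  Glb_Rbar (fun y => exists d : nat -> R,
                feasible abO gamma c N d /\ y = Yplus abT F Y0 d (N - 1)).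

(* Every day the tumour grows by at least [r / alphaT] in the variable Y, while a
   dose can only remove an amount of Y bounded by a fixed multiple of the OAR
   dose it costs.  Hence with more than [BED_ratio * c / (r / alphaT)] fractions no
   feasible schedule ends below Y_0^-, which the single fraction with zero dose
   already achieves; the minimum over N is therefore a minimum over finitely
   many values of N. *)
From Stdlib Require Import Reals Lra Lia.
From Coquelicot Require Import Coquelicot.
Open Scope R_scope.

Lemma growth_map_ge (alphaT r : R) (phi F : R -> R) :
  0 < alphaT -> is_growth_map alphaT phi F ->
  (forall x, 0 < x -> r <= phi x) ->
  forall y, y + r / alphaT <= F y.
Proof.
  intros HalphaT HF Hphi_r y.
  destruct (HF y) as [Yf [HY0 [HYcont [HYder HY1]]]].
  destruct (MVT_gen Yf 0 1 (fun t => phi (exp (alphaT * Yf t)) / alphaT))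
    as [t [_ Hmvt]].
  - intros x Hx; rewrite Rmin_left, Rmax_right in Hx by lra; apply HYder; lra.
  - intros x Hx; rewrite Rmin_left, Rmax_right in Hx by lra; apply HYcont; lra.
  - assert (Hrate : r / alphaT <= phi (exp (alphaT * Yf t)) / alphaT).
    { apply Rmult_le_compat_r; [left; apply Rinv_0_lt_compat; lra |].
      apply Hphi_r, exp_pos. }
    rewrite HY1, <- HY0; lra.
Qed.

Lemma V_le_feasible (abT abO gamma c Y0 : R) (F : R -> R) (N : nat) (d : nat -> R) :
  feasible abO gamma c N d ->
  Rbar_le (V abT abO gamma c F Y0 N) (Yplus abT F Y0 d (N - 1)).
Proof.
  intros Hd; apply (proj1 (Glb_Rbar_correct _)).
  now exists d.
Qed.

Lemma V_ge_lower_bound (abT abO gamma c Y0 m : R) (F : R -> R) (N : nat) :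
  (forall d, feasible abO gamma c N d -> m <= Yplus abT F Y0 d (N - 1)) ->
  Rbar_le m (V abT abO gamma c F Y0 N).
Proof.
  intros Hm; apply (proj2 (Glb_Rbar_correct _)).
  intros y [d [Hd ->]]; exact (Hm d Hd).
Qed.

Lemma V_one_le (abT abO gamma c Y0 : R) (F : R -> R) :
  0 <= c -> Rbar_le (V abT abO gamma c F Y0 1) Y0.
Proof.
  intros Hc.
  apply Rbar_le_trans with (Yplus abT F Y0 (fun _ => 0) (1 - 1)).
  - apply V_le_feasible; split.
    + intros; lra.
    + simpl; unfold BED_O; lra.
  - simpl; unfold BED_T; lra.
Qed.

(* [BED_T d / BED_O d] is bounded on [d > 0]; [BED_ratio] is such a bound. *)
Definition BED_ratio (abT abO gamma : R) : R := / gamma + abO / (gamma * gamma * abT).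

Section Cumulative_dose.

Variables (abT abO gamma : R).
Hypotheses (HabT : 0 < abT) (HabO : 0 < abO) (Hgamma : 0 < gamma).

Lemma BED_ratio_pos : 0 < BED_ratio abT abO gamma.
Proof.
  unfold BED_ratio.
  assert (0 < / gamma) by (apply Rinv_0_lt_compat; lra).
  assert (0 < abO / (gamma * gamma * abT)).
  { apply Rdiv_lt_0_compat; [lra |].
    apply Rmult_lt_0_compat; [apply Rmult_lt_0_compat |]; lra. }
  lra.
Qed.

Lemma BED_T_le_ratio_BED_O (d : R) :
  0 <= d -> BED_T abT d <= BED_ratio abT abO gamma * BED_O abO gamma d.
Proof.
  intros Hd.
  assert (Hgap : BED_ratio abT abO gamma * BED_O abO gamma d - BED_T abT d
                 = gamma * (d * d) / abO + abO * d / (gamma * abT)).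
  { unfold BED_ratio, BED_O, BED_T; field; lra. }
  assert (0 <= gamma * (d * d) / abO).
  { apply Rmult_le_pos; [nra | left; apply Rinv_0_lt_compat; lra]. }
  assert (0 <= abO * d / (gamma * abT)).
  { apply Rmult_le_pos; [nra | left; apply Rinv_0_lt_compat; nra]. }
  lra.
Qed.

Lemma Yplus_ge (F : R -> R) (Y0 q : R) (d : nat -> R) :
  (forall y, y + q <= F y) ->
  forall i, (forall k, (k <= i)%nat -> 0 <= d k) ->
  Y0 + INR i * q - BED_ratio abT abO gamma * sum_BED_O abO gamma d (S i)
  <= Yplus abT F Y0 d i.
Proof.
  intros HF i; induction i as [| i IH]; intros Hd.
  - assert (H := BED_T_le_ratio_BED_O (d O) (Hd O (le_n _))).
    simpl; lra.
  - assert (H := BED_T_le_ratio_BED_O (d (S i)) (Hd _ (le_n _))).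
    assert (IHi := IH (fun k Hk => Hd k (le_S _ _ Hk))).
    assert (HFi := HF (Yplus abT F Y0 d i)).
    rewrite S_INR; simpl Yplus.
    change (sum_BED_O abO gamma d (S (S i)))
      with (sum_BED_O abO gamma d (S i) + BED_O abO gamma (d (S i))).
    lra.
Qed.

Lemma V_ge_of_many_fractions (F : R -> R) (c Y0 q : R) (N : nat) :
  (forall y, y + q <= F y) -> (1 <= N)%nat ->
  BED_ratio abT abO gamma * c <= INR (N - 1) * q ->
  Rbar_le Y0 (V abT abO gamma c F Y0 N).
Proof.
  intros HF HN Hmany; apply V_ge_lower_bound.
  intros d [Hd Hsum].
  assert (Hlow := Yplus_ge F Y0 q d HF (N - 1) (fun k Hk => Hd k ltac:(lia))).
  replace (S (N - 1)) with N in Hlow by lia.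
  assert (BED_ratio abT abO gamma * sum_BED_O abO gamma d N
          <= BED_ratio abT abO gamma * c).
  { apply Rmult_le_compat_l; [left; apply BED_ratio_pos | exact Hsum]. }
  lra.
Qed.

End Cumulative_dose.

Lemma Rbar_argmin_range (f : nat -> Rbar) (M : nat) :
  exists n, (1 <= n <= S M)%nat /\
    forall k, (1 <= k <= S M)%nat -> Rbar_le (f n) (f k).
Proof.
  induction M as [| M [n [Hn Hmin]]].
  - exists 1%nat; split; [lia |].
    intros k Hk; replace k with 1%nat by lia; apply Rbar_le_refl.
  - destruct (Rbar_le_lt_dec (f n) (f (S (S M)))) as [Hle | Hlt].
    + exists n; split; [lia |].
      intros k Hk; destruct (Nat.eq_dec k (S (S M))) as [-> | Hk']; [exact Hle |].
      apply Hmin; lia.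
    + exists (S (S M)); split; [lia |].
      intros k Hk; destruct (Nat.eq_dec k (S (S M))) as [-> | Hk'].
      * apply Rbar_le_refl.
      * apply Rbar_le_trans with (f n); [now apply Rbar_lt_le | apply Hmin; lia].
Qed.

Lemma Rbar_min_attained (f : nat -> Rbar) (a : Rbar) (M : nat) :
  Rbar_le (f 1%nat) a -> (forall N, (M < N)%nat -> Rbar_le a (f N)) ->
  exists n, (1 <= n)%nat /\ forall N, (1 <= N)%nat -> Rbar_le (f n) (f N).
Proof.
  intros Hone Htail.
  destruct (Rbar_argmin_range f M) as [n [Hn Hmin]].
  exists n; split; [lia |]; intros N HN.
  destruct (Nat.le_gt_cases N (S M)) as [Hle | Hgt]; [apply Hmin; lia |].
  apply Rbar_le_trans with (f 1%nat); [apply Hmin; lia |].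
  apply Rbar_le_trans with a; [exact Hone | apply Htail; lia].
Qed.

Theorem theorem4
  (alphaT betaT abO gamma c X0 r : R) (phi F : R -> R)
  (HalphaT : 0 < alphaT) (HbetaT : 0 < betaT) (HabO : 0 < abO)
  (Hgamma0 : 0 < gamma) (Hgamma1 : gamma < 1) (Hc : 0 < c) (HX0 : 0 < X0)
  (Hphi_cont : forall x, 0 < x -> continuity_pt phi x)
  (Hphi_mono : forall x y, 0 < x -> x <= y -> phi y <= phi x)
  (HF : is_growth_map alphaT phi F)
  (Hr : 0 < r) (Hphi_r : forall x, 0 < x -> r < phi x) :
  exists Nstar : nat, (1 <= Nstar)%nat /\
    forall N : nat, (1 <= N)%nat ->
      Rbar_le (V (alphaT / betaT) abO gamma c F (ln X0 / alphaT) Nstar)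
              (V (alphaT / betaT) abO gamma c F (ln X0 / alphaT) N).
Proof.
  set (abT := alphaT / betaT); set (Y0 := ln X0 / alphaT).
  assert (HabT : 0 < abT) by (apply Rdiv_lt_0_compat; lra).
  assert (Hq : 0 < r / alphaT) by (apply Rdiv_lt_0_compat; lra).
  assert (Hgrowth := growth_map_ge alphaT r phi F HalphaT HF
                       (fun x Hx => Rlt_le _ _ (Hphi_r x Hx))).
  destruct (INR_unbounded (BED_ratio abT abO gamma * c / (r / alphaT))) as [M HM].
  apply (Rbar_min_attained _ Y0 M); [apply V_one_le; lra |].
  intros N HN; apply (V_ge_of_many_fractions abT abO gamma) with (r / alphaT);
    [exact HabT | exact HabO | exact Hgamma0 | exact Hgrowth | lia |].
  assert (HMN : INR M <= INR (N - 1)) by (apply le_INR; lia).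
  replace (BED_ratio abT abO gamma * c)
    with (BED_ratio abT abO gamma * c / (r / alphaT) * (r / alphaT)) by (field; lra).
  apply Rmult_le_compat_r; lra.
Qed.
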